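(* Let $X$ be an infinite-dimensional complex Banach space and let $\phi:\mathcal{B}(X)\to\mathcal{B}(X)$ be a surjective map such that $K(\phi(T)\phi(S)+\phi(S)\phi(T))=K(TS+ST)$ for all $T,S\in\mathcal{B}(X)$. Then for every $R\in\mathcal{B}(X)$, $\phi(R)=0$ if and only if $R=0$.
   Context: $\mathcal{B}(X)$ denotes the algebra of all bounded linear operators on $X$. For $T\in\mathcal{B}(X)$, the analytic core $K(T)$ is the set of all $x\in X$ for which there exist $\delta>0$ and a sequence $(x_n)_{n\ge 0}\subset X$ with $x_0=x$, $Tx_{n+1}=x_n$ and $\|x_n\|\le \delta^n\|x\|$ for all $n\ge 0$. *)

From HB Require Import structures.
From mathcomp Require Import all_boot all_order all_algebra.
From mathcomp Require Import all_classical all_reals all_analysis.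
From mathcomp Require Import complex.
Set Implicit Arguments. Unset Strict Implicit. Unset Printing Implicit Defensive.
Import Order.TTheory GRing.Theory Num.Theory.
Import numFieldNormedType.Exports.
Local Open Scope ring_scope.
Local Open Scope classical_set_scope.

Section Defs.
Variables (R : realType).
Local Notation C := (complex R).
Variable (V : completeNormedModType C).

Definition infinite_dimensional : Prop :=
  forall (n : nat) (v : 'I_n -> V),
    exists x : V, forall c : 'I_n -> C, x <> \sum_(i < n) c i *: v i.

Record bop := Bop {
  bop_fun :> V -> V;
  bop_linear : linear bop_fun;
  bop_cont : continuous bop_fun }.

Lemma bop0_linear : linear (fun _ : V => (0 : V)).
Proof. by move=> a x y; rewrite scaler0 addr0. Qed.

Lemma bop0_cont : continuous (fun _ : V => (0 : V)).
Proof. by move=> x; apply: cvg_cst. Qed.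

Definition bop0 : bop := Bop bop0_linear bop0_cont.

Definition analytic_core (T : V -> V) : set V :=
  [set x | exists delta : R, 0 < delta /\
     exists xs : nat -> V, xs 0%N = x /\
       (forall n, T (xs n.+1) = xs n) /\
       (forall n, `|xs n| <= (delta%:C)%C ^+ n * `|x|)].

Definition jordan (T S : V -> V) : V -> V := fun x => T (S x) + S (T x).
End Defs.

(* Write A o T := AT + TA.  Everything rests on a characterisation of the
   zero operator (bop0_iff_cores_trivial):
       A = 0   <->   K(A o T) = {0} for every bounded operator T.
   "->" holds because A o T is then the zero map.  For "<-", if A x <> 0 we
   find a bounded functional f for which x is a fixed point of A o T, where
   T v = f(v) x is rank one; fixed points lie in the analytic core.  The main theorem then follows
   by transporting "K(- o -) = {0}" through phi, using its surjectivity for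
   the implication R = 0 -> phi R = 0. *)

From HB Require Import structures.
From mathcomp Require Import all_boot all_order all_algebra.
From mathcomp Require Import all_classical all_reals all_analysis.
From mathcomp Require Import complex.
From mathcomp Require Import ring lra.
Set Implicit Arguments. Unset Strict Implicit. Unset Printing Implicit Defensive.
Import Order.TTheory GRing.Theory Num.Theory.
Import numFieldNormedType.Exports.
Local Open Scope ring_scope.
Local Open Scope classical_set_scope.
Local Open Scope complex_scope.

Section RealNorm.
Variables (R : realType) (V : normedModType (complex R)).

(* The norm of V takes values in [0, +oo) ⊆ C; rnorm is its real part. *)
Definition rnorm (v : V) : R := complex.Re `|v|.

Lemma normE (v : V) : `|v| = (rnorm v)%:C.
Proof.
have : (0 : complex R) <= `|v| by [].
rewrite /rnorm; case: (`|v|) => a b; rewrite lecE /= => /andP[/eqP -> _].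
by apply/eqP; rewrite eq_complex /= !eqxx.
Qed.

Lemma rnorm_ge0 v : 0 <= rnorm v.
Proof. by have : (0 : complex R) <= `|v| by []; rewrite normE lecR. Qed.

Lemma rnorm_gt0 v : v != 0 -> 0 < rnorm v.
Proof. by rewrite -normr_gt0 normE ltcR. Qed.

Lemma rnormD v w : rnorm (v + w) <= rnorm v + rnorm w.
Proof. by have := ler_normD v w; rewrite !normE -rmorphD lecR. Qed.

Lemma normcR (r : R) : `|r%:C| = `|r|%:C.
Proof. by rewrite normc_def /= expr0n addr0 sqrtr_sqr. Qed.

Lemma rnormZ (r : R) v : rnorm (r%:C *: v) = `|r| * rnorm v.
Proof. by have := normrZ r%:C v; rewrite !normE normcR -rmorphM => -[]. Qed.

Lemma rnormZ_ge0 (r : R) v : 0 <= r -> rnorm (r%:C *: v) = r * rnorm v.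
Proof. by move=> r_ge0; rewrite rnormZ ger0_norm. Qed.

Lemma scalecRVK (r : R) (v : V) : r != 0 -> r%:C *: (r^-1%:C *: v) = v.
Proof. by move=> r0; rewrite scalerA -rmorphM mulfV // rmorph1 scale1r. Qed.

Lemma normci : `|'i : complex R| = 1.
Proof. by rewrite normc_def /= expr0n add0r expr1n sqrtr1. Qed.

Lemma rnorm_scalei v : rnorm ('i *: v) = rnorm v.
Proof. by rewrite /rnorm normrZ normci mul1r. Qed.

Lemma rnormN v : rnorm (- v) = rnorm v.
Proof. by rewrite /rnorm normrN. Qed.

End RealNorm.

Section RealHahnBanach.
Variables (R : realType) (V : normedModType (complex R)).
Implicit Types (v d w : V) (a r t c : R) (G : set (V * R)).
Local Notation rnorm := (@rnorm R V).

(* G is the graph of an R-linear functional on an R-subspace of V which is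
   dominated by the norm and attains it at w. *)
Definition dominated_graph w G :=
  [/\ (forall v a b, G (v, a) -> G (v, b) -> a = b),
      (forall r v a v' a', G (v, a) -> G (v', a') ->
         G (r%:C *: v + v', r * a + a')),
      (forall v a, G (v, a) -> a <= rnorm v) & G (w, rnorm w)].

Lemma dominated_graph0 w G : dominated_graph w G -> G (0, 0).
Proof.
case=> _ Glin _ Gw; have := Glin (-1) _ _ _ _ Gw Gw.
by rewrite rmorphN1 scaleN1r addNr mulN1r addNr.
Qed.

Lemma dominated_graphZ w G r v a :
  dominated_graph w G -> G (v, a) -> G (r%:C *: v, r * a).
Proof.
move=> domG Gv; have G0 := dominated_graph0 domG; case: domG => _ Glin _ _.
by have := Glin r _ _ _ _ Gv G0; rewrite !addr0.
Qed.

Lemma dominated_graphD w G v a v' a' :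
  dominated_graph w G -> G (v, a) -> G (v', a') -> G (v + v', a + a').
Proof.
case=> _ Glin _ _ Gv Gv'.
by have := Glin 1 _ _ _ _ Gv Gv'; rewrite rmorph1 scale1r mul1r.
Qed.

(* The family to which Zorn's lemma is applied: the empty set is added so
   that the union of the empty chain belongs to it. *)
Definition graph_or_empty w G := G = set0 \/ dominated_graph w G.

Lemma graph_or_empty_nonempty w G z :
  graph_or_empty w G -> G z -> dominated_graph w G.
Proof. by case=> // ->. Qed.

(* A union of a chain of dominated graphs is again one: any two points of
   the union lie in a common member of the chain. *)
Lemma chain_union_graph w (F : set (set (V * R))) :
  F `<=` graph_or_empty w -> total_on F subset ->
  graph_or_empty w (\bigcup_(X in F) X).
Proof.
move=> Fgraph Ftot.
have common X Y z z' : F X -> F Y -> X z -> Y z' ->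
    exists2 Z, F Z & Z z /\ Z z'.
  move=> FX FY Xz Yz'; case: (Ftot _ _ FX FY) => [XY|YX].
    by exists Y => //; split => //; apply: XY.
  by exists X => //; split => //; apply: YX.
have [[z [X FX Xz]]|empty] := pselect (exists z, (\bigcup_(X in F) X) z);
  last by left; apply/seteqP; split => // z Uz; apply: empty; exists z.
have domZ Z z' : F Z -> Z z' -> dominated_graph w Z.
  by move=> FZ; exact: graph_or_empty_nonempty (Fgraph _ FZ).
right; split.
- move=> v a b [Y FY Ya] [Y' FY' Yb].
  have [Z FZ [Za Zb]] := common _ _ _ _ FY FY' Ya Yb.
  by case: (domZ _ _ FZ Za) => Zfun _ _ _; exact: Zfun Za Zb.
- move=> r v a v' a' [Y FY Ya] [Y' FY' Yb].
  have [Z FZ [Za Zb]] := common _ _ _ _ FY FY' Ya Yb.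
  by exists Z => //; case: (domZ _ _ FZ Za) => _ Zlin _ _; exact: Zlin Za Zb.
- by move=> v a [Y FY Ya]; case: (domZ _ _ FY Ya) => _ _ Ydom _; exact: Ydom Ya.
- by exists X => //; case: (domZ _ _ FX Xz).
Qed.

(* The one-step extension constant: a value c at v0 compatible with the
   domination, found as the supremum of the lower constraints. *)
Lemma extension_constant w G v0 : dominated_graph w G ->
  exists c, forall d a, G (d, a) ->
    a - rnorm (d - v0) <= c /\ c <= rnorm (d + v0) - a.
Proof.
move=> domG; have [_ _ Gdom _] := domG.
have sep d1 a1 d2 a2 : G (d1, a1) -> G (d2, a2) ->
    a1 - rnorm (d1 - v0) <= rnorm (d2 + v0) - a2.
  move=> G1 G2; have := Gdom _ _ (dominated_graphD domG G1 G2).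
  have -> : d1 + d2 = (d1 - v0) + (d2 + v0) by rewrite addrA addrAC subrK.
  by have := rnormD (d1 - v0) (d2 + v0); lra.
pose E := [set x | exists d a, G (d, a) /\ x = a - rnorm (d - v0)].
have G0 := dominated_graph0 domG.
have E0 : E !=set0 by exists (0 - rnorm (0 - v0)); exists 0, 0.
have Eub : ubound E (rnorm (0 + v0) - 0).
  by move=> x [d [a [Gd ->]]]; exact: sep Gd G0.
exists (sup E) => d a Gd; split.
  by apply: (ub_le_sup (ex_intro _ _ Eub)); exists d, a.
by apply: ge_sup => // x [d' [a' [Gd' ->]]]; exact: sep Gd' Gd.
Qed.

Lemma extension_dominated G v0 c :
  (forall v a, G (v, a) -> a <= rnorm v) ->
  (forall r v a, G (v, a) -> G (r%:C *: v, r * a)) ->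
  (forall d a, G (d, a) -> a - rnorm (d - v0) <= c /\ c <= rnorm (d + v0) - a) ->
  forall d a t, G (d, a) -> a + t * c <= rnorm (d + t%:C *: v0).
Proof.
move=> Gdom GZ hc d a t Gd.
have [t_lt0|t_gt0|->] := ltgtP t 0; last first.
- by rewrite mul0r addr0 rmorph0 scale0r addr0; exact: Gdom.
- have [_] := hc _ _ (GZ t^-1 _ _ Gd); move/(ler_wpM2l (ltW t_gt0)).
  rewrite mulrBr mulrA mulfV ?gt_eqF // mul1r -(rnormZ_ge0 _ (ltW t_gt0)).
  by rewrite scalerDr scalecRVK ?gt_eqF //; lra.
- have nt_gt0 : 0 < - t by rewrite oppr_gt0.
  have [+ _] := hc _ _ (GZ (- t)^-1 _ _ Gd); move/(ler_wpM2l (ltW nt_gt0)).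
  rewrite mulrBr mulrA mulfV ?gt_eqF // mul1r -(rnormZ_ge0 _ (ltW nt_gt0)).
  by rewrite scalerBr scalecRVK ?gt_eqF // rmorphN scaleNr opprK; lra.
Qed.

Lemma graph_extend w G v0 : dominated_graph w G -> (forall a, ~ G (v0, a)) ->
  exists2 H, G `<` H & dominated_graph w H.
Proof.
move=> domG Gv0; have [Gfun Glin Gdom Gw] := domG.
have [c hc] := extension_constant v0 domG.
pose H := [set z | exists d a t, G (d, a) /\ z = (d + t%:C *: v0, a + t * c)].
have GH : G `<=` H.
  by move=> [d a] Gd; exists d, a, 0; rewrite rmorph0 scale0r mul0r !addr0.
exists H.
  split => // HG; apply: (Gv0 c); apply: HG.
  exists 0, 0, 1; split; first exact: dominated_graph0 domG.
  by rewrite rmorph1 scale1r mul1r !add0r.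
split.
- move=> v x y [d [a [t [Gd [-> ->]]]]] [d' [a' [t' [Gd' [e ->]]]]].
  have [tt'|tt'] := eqVneq t t'.
    by subst t'; move/addIr: e => ed; subst d'; rewrite (Gfun _ _ _ Gd Gd').
  (* otherwise v0 would lie in the domain of G *)
  exfalso; apply: (Gv0 ((t - t')^-1 * (a' - a))).
  have Gdiff : G (d' - d, a' - a).
    have := dominated_graphD domG Gd' (dominated_graphZ (-1) domG Gd).
    by rewrite rmorphN1 scaleN1r mulN1r.
  have ev0 : (t - t')%:C *: v0 = d' - d.
    rewrite rmorphB scalerBl; apply: (addrI d).
    by rewrite addrA e addrK addrC subrK.
  have := dominated_graphZ (t - t')^-1 domG Gdiff.
  by rewrite -ev0 scalerA -rmorphM mulVf ?subr_eq0 // rmorph1 scale1r.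
- move=> r v x v' x' [d [a [t [Gd [-> ->]]]]] [d' [a' [t' [Gd' [-> ->]]]]].
  exists (r%:C *: d + d'), (r * a + a'), (r * t + t'); split; first exact: Glin.
  congr (_, _); last by rewrite mulrDr mulrDl mulrA addrACA.
  by rewrite scalerDr scalerA -rmorphM rmorphD scalerDl addrACA.
- move=> v x [d [a [t [Gd [-> ->]]]]].
  exact: (extension_dominated Gdom (fun r _ _ => dominated_graphZ r domG)).
- exact: GH.
Qed.

Lemma real_hahn_banach w : w != 0 -> exists u : V -> R,
  [/\ forall r v1 v2, u (r%:C *: v1 + v2) = r * u v1 + u v2,
      forall v, u v <= rnorm v & u w = rnorm w].
Proof.
move=> w0; have [G [Ggraph Gmax]] := Zorn_bigcup (@chain_union_graph w).
pose line := [set z : V * R | exists t, z = (t%:C *: w, t * rnorm w)].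
have line_graph : dominated_graph w line.
  split.
  - move=> v a b [t [-> ->]] [s [ts ->]]; congr (_ * _).
    have /eqP : (t - s)%:C *: w = 0 by rewrite rmorphB scalerBl ts subrr.
    rewrite scaler_eq0 (negbTE w0) orbF => /eqP/(congr1 (@complex.Re R)) /=.
    by move/eqP; rewrite subr_eq0 => /eqP.
  - move=> r v a v' a' [t [-> ->]] [s [-> ->]]; exists (r * t + s).
    by rewrite scalerA -rmorphM rmorphD scalerDl mulrDl mulrA.
  - move=> v a [t [-> ->]]; rewrite rnormZ ler_wpM2r ?rnorm_ge0 //.
    exact: ler_norm.
  - by exists 1; rewrite rmorph1 scale1r mul1r.
have domG : dominated_graph w G.
  case: Ggraph => // G0; exfalso; apply: (Gmax line); last by right.
  by rewrite G0; split => // lineG; case: line_graph => _ _ _ /lineG.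
have total v : exists a, G (v, a).
  apply: contrapT => Gv.
  have [H GH domH] := graph_extend domG (fun a Ga => Gv (ex_intro _ a Ga)).
  by apply: (Gmax H GH); right.
have [Gfun Glin Gdom Gw] := domG.
pose u v := xget 0 [set a | G (v, a)].
have Gu v : G (v, u v) by rewrite /u; apply: (xgetPex 0 (total v)).
exists u; split.
- by move=> r v1 v2; apply: Gfun (Gu _) (Glin _ _ _ _ _ (Gu _) (Gu _)).
- by move=> v; exact: Gdom (Gu v).
- exact: Gfun (Gu w) Gw.
Qed.
End RealHahnBanach.

Lemma complex_ext (R : realType) (z1 z2 : complex R) :
  complex.Re z1 = complex.Re z2 -> complex.Im z1 = complex.Im z2 -> z1 = z2.
Proof. by case: z1 z2 => [? ?] [? ?] /= -> ->. Qed.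

Section BoundedFunctionals.
Variables (R : realType) (V : normedModType (complex R)).
Local Notation C := (complex R).
Implicit Types (f g : V -> C) (v x y : V).
Local Notation rnorm := (@rnorm R V).

Definition bounded_functional f :=
  [/\ forall v1 v2, f (v1 + v2) = f v1 + f v2,
      forall (al : C) v, f (al *: v) = al * f v &
      exists2 M, 0 <= M & forall v, `|f v| <= M * `|v|].

Lemma bounded_functionalZ (al : C) f :
  bounded_functional f -> bounded_functional (fun v => al * f v).
Proof.
case=> fD fZ [M M_ge0 fM]; split.
- by move=> v1 v2; rewrite fD mulrDr.
- by move=> be v; rewrite fZ mulrCA.
- exists (`|al| * M) => [|v]; first by rewrite mulr_ge0.
  by rewrite normrM -mulrA ler_wpM2l.
Qed.

Lemma bounded_functionalD f g : bounded_functional f -> bounded_functional g ->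
  bounded_functional (fun v => f v + g v).
Proof.
case=> fD fZ [M M_ge0 fM] [gD gZ [N N_ge0 gN]]; split.
- by move=> v1 v2; rewrite fD gD addrACA.
- by move=> al v; rewrite fZ gZ mulrDr.
- exists (M + N) => [|v]; first by rewrite addr_ge0.
  by rewrite mulrDl (le_trans (ler_normD _ _)) // lerD.
Qed.

Lemma complexification (u : V -> R) :
  (forall r v1 v2, u (r%:C *: v1 + v2) = r * u v1 + u v2) ->
  (forall v, u v <= rnorm v) ->
  bounded_functional (fun v => (u v)%:C - 'i * (u ('i *: v))%:C).
Proof.
move=> ulin udom.
have uD v1 v2 : u (v1 + v2) = u v1 + u v2.
  by have := ulin 1 v1 v2; rewrite rmorph1 scale1r mul1r.
have uZ r v : u (r%:C *: v) = r * u v.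
  have u0 : u 0 = 0 by have := uD 0 0; rewrite addr0 => ?; lra.
  by have := ulin r v 0; rewrite !addr0 u0 addr0.
have ubound v : `|u v| <= rnorm v.
  have := udom ((-1)%:C *: v); rewrite uZ rmorphN1 scaleN1r rnormN.
  by rewrite ler_norml udom andbT; lra.
split.
- by move=> v1 v2; rewrite scalerDr !uD !rmorphD mulrDr opprD addrACA.
- move=> [a b] v.
  have e1 : (a +i* b) *: v = a%:C *: v + b%:C *: ('i *: v).
    by rewrite !scalerA -scalerDl; congr (_ *: v); apply: complex_ext => /=; ring.
  have e2 : 'i *: ((a +i* b) *: v) = a%:C *: ('i *: v) + (- b)%:C *: v.
    by rewrite !scalerA -scalerDl; congr (_ *: v); apply: complex_ext => /=; ring.
  by rewrite e2 e1 !uD !uZ; apply: complex_ext => /=; ring.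
- exists 2%:R => [|v]; first by rewrite ler0n.
  rewrite (le_trans (ler_normB _ _)) // normrM normci mul1r !normcR normE.
  rewrite -rmorphD -[2%:R](rmorph_nat (@real_complex R)) -rmorphM lecR.
  by have := ubound v; have := ubound ('i *: v); rewrite rnorm_scalei; lra.
Qed.

Lemma complex_hahn_banach w : w != 0 ->
  exists2 f, bounded_functional f & f w != 0.
Proof.
move=> w0; have [u [ulin udom uw]] := real_hahn_banach w0.
exists (fun v => (u v)%:C - 'i * (u ('i *: v))%:C).
  exact: complexification.
apply/eqP => /(congr1 (@complex.Re R)) /=.
by rewrite uw; have := rnorm_gt0 w0; lra.
Qed.

Lemma functional_value x (c : C) : x != 0 ->
  exists2 f, bounded_functional f & f x = c.
Proof.
move=> x0; have [h hf hx] := complex_hahn_banach x0.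
by exists (fun v => c / h x * h v); [exact: bounded_functionalZ | rewrite divfK].
Qed.

Lemma separating_functional x y : x != 0 -> (forall mu : C, y != mu *: x) ->
  exists f, [/\ bounded_functional f, f x = 0 & f y = 1].
Proof.
move=> x0 y_indep.
have y0 : y != 0 by have := y_indep 0; rewrite scale0r.
have [g gf gy] := complex_hahn_banach y0; have [gD gZ _] := gf.
pose w := g x *: y - g y *: x.
have w0 : w != 0.
  apply/eqP => /eqP; rewrite subr_eq0 => /eqP gxy.
  have [gx0|gx0] := eqVneq (g x) 0.
    move: gxy; rewrite gx0 scale0r => /esym/eqP.
    by rewrite scaler_eq0 (negbTE gy) (negbTE x0).
  move/eqP: (y_indep (g y / g x)); apply; apply: (scalerI gx0).
  by rewrite scalerA mulrCA mulfV // mulr1.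
have [h hf hw] := complex_hahn_banach w0; have [hD hZ _] := hf.
pose d := h x * g y - g x * h y.
have d0 : d != 0.
  have hN v : h (- v) = - h v by rewrite -scaleN1r hZ mulN1r.
  have hwd : h w = - d by rewrite /w hD hN !hZ /d; ring.
  by apply: contraNneq hw => d0; rewrite hwd d0 oppr0.
exists (fun v => h x / d * g v + (- g x / d) * h v); split.
- exact: bounded_functionalD (bounded_functionalZ _ gf) (bounded_functionalZ _ hf).
- by ring.
- by rewrite /d; field; rewrite -/d.
Qed.
End BoundedFunctionals.

Section RankOneOperators.
Variables (R : realType) (V : completeNormedModType (complex R)).
Local Notation C := (complex R).

HB.instance Definition _ (A : bop V) :=
  GRing.isLinear.Build C V V *:%R A (bop_linear A).

Lemma rank_one_linear (f : V -> C) (z : V) : bounded_functional f ->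
  linear (fun v => f v *: z).
Proof. by case=> fD fZ _ a u v; rewrite fD fZ scalerDl scalerA. Qed.

(* v |-> f v z is Lipschitz with constant M `|z| + 1, M a bound of f. *)
Lemma rank_one_continuous (f : V -> C) (z : V) : bounded_functional f ->
  continuous (fun v => f v *: z).
Proof.
case=> fD fZ [M M_ge0 fM] x.
pose L := M * `|z| + 1.
have L_gt0 : 0 < L by rewrite ltr_wpDl // mulr_ge0.
have lipschitz y : `|f x *: z - f y *: z| <= L * `|x - y|.
  have -> : f x *: z - f y *: z = f (x - y) *: z.
    by rewrite -scalerBl fD -[- y]scaleN1r fZ mulN1r.
  rewrite normrZ (le_trans (ler_wpM2r (normr_ge0 _) (fM _))) //.
  by rewrite mulrAC ler_wpM2r // lerDl.
apply/cvgrPdist_lt => e e_gt0; near=> y.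
rewrite (le_lt_trans (lipschitz y)) // -ltr_pdivlMl //.
near: y; apply: cvgr_dist_lt => //; by rewrite mulr_gt0 ?invr_gt0.
Unshelve. all: by end_near.
Qed.

Definition rank_one (f : V -> C) (z : V) (hf : bounded_functional f) : bop V :=
  Bop (@rank_one_linear f z hf) (@rank_one_continuous f z hf).

(* If A x != 0, then x is a fixed point of A T + T A for a rank-one T with
   range C x: if A x = mu x take f x = 1 / (2 mu), otherwise f x = 0 and
   f (A x) = 1. *)
Lemma jordan_rank_one_fixed (A : bop V) x : A x != 0 ->
  exists f (hf : bounded_functional f), jordan A (rank_one x hf) x = x.
Proof.
move=> Ax0; have x0 : x != 0 by apply: contraNneq Ax0 => ->; rewrite linear0.
have jordanE f (hf : bounded_functional f) :
    jordan A (rank_one x hf) x = f x *: A x + f (A x) *: x.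
  by rewrite /jordan /= linearZ.
have [[mu Axmu]|indep] := pselect (exists mu, A x = mu *: x).
- have mu0 : mu != 0 by apply: contraNneq Ax0 => mu0; rewrite Axmu mu0 scale0r.
  have [f hf fx] := functional_value (2 * mu)^-1 x0; have [_ fZ _] := hf.
  exists f, hf; rewrite jordanE Axmu fZ scalerA -scalerDl fx -[RHS]scale1r.
  by congr (_ *: _); field.
- have [|f [hf fx fAx]] := separating_functional (y := A x) x0.
    by move=> mu; apply/eqP => Axmu; apply: indep; exists mu.
  by exists f, hf; rewrite jordanE fx fAx scale0r add0r scale1r.
Qed.
End RankOneOperators.

Section AnalyticCore.
Variables (R : realType) (V : completeNormedModType (complex R)).

(* Fixed points lie in the analytic core: take the constant sequence. *)
Lemma analytic_core_fixed (g : V -> V) x : g x = x -> analytic_core g x.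
Proof.
move=> gx; exists 1; split => //; exists (fun=> x); split => //; split => // n.
by rewrite rmorph1 expr1n mul1r.
Qed.

(* The analytic core of the zero map is {0}: x = g x_1 = 0. *)
Lemma analytic_core_of_zero (g : V -> V) :
  (forall x, g x = 0) -> analytic_core g `<=` [set 0].
Proof. by move=> g0 x [d [_ [xs [<- [xsS _]]]]]; rewrite -(xsS 0) g0. Qed.

Lemma bop_eq0 (A : bop V) : (forall x, A x = 0) -> A = bop0 V.
Proof.
case: A => fA lA cA /= A0; have eA : fA = (fun=> 0) by apply: funext.
by subst fA; congr Bop; exact: Prop_irrelevance.
Qed.

Lemma bop0_iff_cores_trivial (A : bop V) :
  A = bop0 V <-> forall T : bop V, analytic_core (jordan A T) `<=` [set 0].
Proof.
split=> [-> T | cores0].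
  by apply: analytic_core_of_zero => x; rewrite /jordan /= linear0 add0r.
apply: bop_eq0 => x; apply: contrapT => /eqP Ax0.
have [f [hf fixed]] := jordan_rank_one_fixed Ax0.
have x0 : x = 0 := cores0 _ _ (analytic_core_fixed fixed).
by move: Ax0; rewrite x0 linear0 eqxx.
Qed.

Lemma jordanC (T S : V -> V) : jordan T S = jordan S T.
Proof. by apply: funext => x; rewrite /jordan addrC. Qed.
End AnalyticCore.

Theorem mainTheorem5 (R : realType) (V : completeNormedModType (complex R))
  (phi : bop V -> bop V) :
  infinite_dimensional V ->
  (forall T : bop V, exists S : bop V, phi S = T) ->
  (forall T S : bop V,
     analytic_core (jordan (phi T) (phi S)) = analytic_core (jordan T S)) ->
  forall Rop : bop V, phi Rop = bop0 V <-> Rop = bop0 V.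
Proof.
move=> _ phi_onto phi_core Rop.
have core0 := (bop0_iff_cores_trivial (bop0 V)).1 erefl.
split=> [phiR0 | ->]; apply/bop0_iff_cores_trivial => T.
- by rewrite jordanC -phi_core phiR0 jordanC; exact: core0.
- by have [S <-] := phi_onto T; rewrite phi_core; exact: core0.
Qed.
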